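(* Let $p$ be a prime, $n$ a positive integer, $s\ge 0$ an integer, and $d$ a positive integer with $\gcd(d,p^n-1)=1$. Let $F:\mathbb{F}_{p^n}\to\mathbb{F}_{p^n}$, $F(x)=x^d$. Suppose the cross-correlation function $\theta(\tau)$, $0\le\tau\le p^n-2$, of the $p$-ary $m$-sequences $u$ and $v$ that differ by decimation $d$ takes exactly the three values $-1$, $-1+p^{(n+s)/2}$ and $-1-p^{(n+s)/2}$. Then $F$ is a vectorial $s$-plateaued function, i.e. $|\widehat{F_b}(a)|\in\{0,p^{(n+s)/2}\}$ for all $b\in\mathbb{F}_{p^n}^*$ and $a\in\mathbb{F}_{p^n}$.
   Context: $\zeta_p=e^{2\pi i/p}$, $Tr_n(z)=\sum_{i=0}^{n-1}z^{p^i}$. Let $\sigma$ be a primitive element of $\mathbb{F}_{p^n}$; the $m$-sequence is $u(t)=Tr_n(\sigma^t)$ and its decimation is $v(t)=u(dt)$; the cross-correlation is $\theta(\tau)=\sum_{t=0}^{p^n-2}\zeta_p^{u(t+\tau)-v(t)}$. For $b\in\mathbb{F}_{p^n}^*$, $F_b(x)=Tr_n(bF(x))$ and $\widehat{F_b}(a)=\sum_{x\in\mathbb{F}_{p^n}}\zeta_p^{F_b(x)-Tr_n(ax)}$. *)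

From mathcomp Require Import all_boot all_order all_algebra all_field.
Set Implicit Arguments. Unset Strict Implicit. Unset Printing Implicit Defensive.
Import Order.TTheory GRing.Theory Num.Theory.
Local Open Scope ring_scope.

(* zeta_p = e^{2 pi i / p} in algC: p.-root (-1) is the p-th root of -1 with
   minimal nonnegative argument, i.e. e^{i pi/p}; its square is e^{2 pi i/p}. *)
Definition zeta (p : nat) : algC := (p.-root (-1)) ^+ 2.

Definition Tr {F : finFieldType} (p n : nat) (z : F) : F :=
  \sum_(i < n) z ^+ (p ^ i).

Definition fp_idx {F : finFieldType} (p : nat) (y : F) : nat :=
  odflt 0%N (omap (@nat_of_ord p) [pick k : 'I_p | (k%:R : F) == y]).

Definition chi {F : finFieldType} (p : nat) (y : F) : algC :=
  zeta p ^+ fp_idx p y.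

(* cross-correlation theta(tau) of u(t) = Tr(sigma^t) and v(t) = u(d t) *)
Definition theta {F : finFieldType} (p n d : nat) (sigma : F) (tau : nat) : algC :=
  \sum_(t < p ^ n - 1) chi p (Tr p n (sigma ^+ (t + tau)) - Tr p n (sigma ^+ (d * t))).

Definition walsh {F : finFieldType} (p n d : nat) (b a : F) : algC :=
  \sum_(x : F) chi p (Tr p n (b * x ^+ d) - Tr p n (a * x)).

From mathcomp Require Import all_boot all_order all_algebra all_field.
From mathcomp Require Import zify.
Set Implicit Arguments. Unset Strict Implicit. Unset Printing Implicit Defensive.
Import Order.TTheory GRing.Theory Num.Theory.
Local Open Scope ring_scope.

(* For [b != 0] pick [lam] with [b * lam ^+ d = 1]; it exists because [x |-> x ^+ d]
   permutes [F] when [d] is coprime to [p ^ n - 1].  Substituting [x |-> lam * x] turns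
   [walsh b a] into [walsh 1 (a * lam)].  If [a = 0] this is a complete sum of the
   additive character [y |-> zeta_p ^ Tr y], hence [0].  Otherwise [a * lam = sigma ^+ tau]
   and [walsh 1 (sigma ^+ tau)] is the complex conjugate of [1 + theta tau]: the term
   [x = 0] gives the [1], and [x = sigma ^+ t] gives the [t]-th term of the
   cross-correlation.  Hence [|walsh b a| = |1 + theta tau|], which is [0] or
   [p ^ ((n + s) / 2)]. *)

Section Zeta.
Variable p : nat.
Hypothesis p_gt1 : (1 < p)%N.

Lemma zeta_expp : zeta p ^+ p = 1.
Proof. by rewrite /zeta -exprM mulnC exprM rootCK ?sqrrN ?expr1n // ltnW. Qed.

(* [r := p.-root (-1)] is neither [1] (as [r ^+ p = -1]) nor [-1] (by [rootC_lt0]). *)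
Lemma zeta_neq1 : zeta p != 1.
Proof.
set r := p.-root (-1 : algC); have rp : r ^+ p = -1 by rewrite rootCK // ltnW.
apply/eqP; rewrite /zeta -/r => /eqP; rewrite sqrf_eq1 => /orP[] /eqP r_eq.
  by move: rp; rewrite r_eq expr1n => /eqP; rewrite -addr_eq0 (eqC_nat 2 0).
by have := rootC_lt0 (-1 : algC) p_gt1; rewrite -/r r_eq ltrN10.
Qed.

Lemma conjC_zeta : (zeta p)^* = zeta p ^+ p.-1.
Proof.
have p_gt0 := ltnW p_gt1.
have z_norm : `|zeta p| = 1.
  by apply/eqP; rewrite -(pexpr_eq1 p_gt0) // -normrX zeta_expp normr1.
have z_neq0 : zeta p != 0 by rewrite -normr_eq0 z_norm oner_eq0.
by apply: (mulfI z_neq0); rewrite -exprS prednK // zeta_expp -normCK z_norm expr1n.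
Qed.

End Zeta.

Section FiniteField.
Variable F : finFieldType.

Let card_gt0 : (0 < #|F|)%N := ltnW (finNzRing_gt1 F).
Let card_pred_gt0 : (0 < #|F|.-1)%N.
Proof. by rewrite -ltnS prednK // finNzRing_gt1. Qed.

Lemma expr_coprime_bij d : (0 < d)%N -> coprime d #|F|.-1 ->
  bijective (fun x : F => x ^+ d).
Proof.
move=> d_gt0 d_coprime; have [e k Ede _] := egcdnP #|F|.-1 d_gt0.
rewrite (eqP d_coprime) in Ede.
have exprK (x : F) : x ^+ (d * e) = x.
  have [->|x_neq0] := eqVneq x 0.
    by rewrite expr0n mulnC Ede addn1.
  have x_unity : x ^+ #|F|.-1 = 1.
    by apply: (mulIf x_neq0); rewrite mul1r -exprSr prednK ?expf_card.
  by rewrite mulnC Ede addn1 exprS mulnC exprM x_unity expr1n mulr1.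
by exists (fun x => x ^+ e) => x /=; rewrite -exprM ?exprK // mulnC exprK.
Qed.

Section PrimitiveRoot.
Variable sigma : F.
Hypothesis sigma_prim : #|F|.-1.-primitive_root sigma.

Lemma prim_root_expr_inj : injective (fun t : 'I_#|F|.-1 => sigma ^+ t).
Proof.
move=> i j /eqP; rewrite (eq_prim_root_expr sigma_prim) !modn_small ?ltn_ord //.
by move/eqP/val_inj.
Qed.

Lemma prim_root_expr_image : [set sigma ^+ t | t : 'I_#|F|.-1] = [set~ 0].
Proof.
have sigma_neq0 : sigma != 0.
  apply/eqP => sigma0; have := prim_expr_order sigma_prim.
  by rewrite sigma0 expr0n gtn_eqF // => /eqP; rewrite eq_sym oner_eq0.
apply/eqP; rewrite eqEcard cardsC1 card_imset ?card_ord ?leqnn ?andbT.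
  by apply/subsetP => _ /imsetP[t _ ->]; rewrite !inE expf_neq0.
exact: prim_root_expr_inj.
Qed.

End PrimitiveRoot.

Lemma walsh_scale (p n d : nat) (b a lam : F) : lam != 0 -> b * lam ^+ d = 1 ->
  walsh p n d b a = walsh p n d 1 (a * lam).
Proof.
move=> lam_neq0 blam; rewrite /walsh (reindex_inj (mulfI lam_neq0)).
by apply: eq_bigr => x _; rewrite exprMn mulrA blam mulrA.
Qed.

End FiniteField.

Section PrimeSubfield.
Variables (F : finFieldType) (p : nat).
Hypothesis pF : p \in [pchar F].

Let p_prime : prime p := pcharf_prime pF.
Let p_gt1 : (1 < p)%N := prime_gt1 p_prime.
Let p_gt0 : (0 < p)%N := ltnW p_gt1.

Lemma natr_inj_pchar k l : (k < p)%N -> (l < p)%N -> (k%:R : F) = l%:R -> k = l.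
Proof.
wlog le_kl : k l / (k <= l)%N.
  move=> IH kp lp Ekl; have [le_kl|/ltnW le_lk] := leqP k l; first exact: IH.
  exact/esym/IH.
move=> _ lp Ekl; have : ((l - k)%:R : F) == 0 by rewrite natrB // Ekl subrr.
rewrite -(dvdn_pcharf pF); have [? _|lk_gt0 /(dvdn_leq lk_gt0)] := posnP (l - k); lia.
Qed.

Lemma fp_idx_natr k : (k < p)%N -> fp_idx p (k%:R : F) = k.
Proof.
move=> kp; rewrite /fp_idx; case: pickP => [k' /eqP Ek|/(_ (Ordinal kp))].
  exact: natr_inj_pchar (ltn_ord k') kp Ek.
by rewrite eqxx.
Qed.

Lemma chi_natr m : chi p (m%:R : F) = zeta p ^+ m.
Proof.
rewrite /chi -(GRing.natr_mod_pchar pF) fp_idx_natr ?ltn_mod //.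
by rewrite (expr_mod _ (zeta_expp p_gt1)).
Qed.

Lemma chi_natrB m k : chi p (m%:R - k%:R : F) = zeta p ^+ m * (zeta p ^+ k)^*.
Proof.
have -> : - (k%:R : F) = (p.-1 * k)%:R.
  apply: addr0_eq; rewrite -natrD -mulSn prednK //.
  by rewrite natrM (GRing.pcharf0 pF) mul0r.
by rewrite -natrD !chi_natr exprD rmorphXn /= conjC_zeta // exprM.
Qed.

Lemma pFrobenius_fixed_natr (y : F) : y ^+ p = y -> exists m, y = m%:R.
Proof.
move=> y_fixed; have [i /eqP ->|y_notin] := pickP (fun i : 'I_p => y == i%:R).
  by exists i.
pose roots := y :: [seq (i%:R : F) | i <- iota 0 p].
pose P : {poly F} := 'X^p - 'X.
have size_P : size P = p.+1.
  by rewrite /P size_polyDl ?size_polyXn // size_polyN size_polyX.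
have P_neq0 : P != 0 by rewrite -size_poly_eq0 size_P.
have roots_P : all (root P) roots.
  apply/allP => x; rewrite inE => /orP[/eqP->|/mapP[i _ ->]];
    rewrite /root !hornerE ?y_fixed ?subrr //.
  by rewrite -(pFrobenius_autE pF) pFrobenius_aut_nat subrr.
have uniq_roots : uniq roots.
  rewrite /= map_inj_in_uniq ?iota_uniq ?andbT; last first.
    by move=> i j; rewrite !mem_iota /= => ip jp; apply: natr_inj_pchar.
  apply/mapP => -[i]; rewrite mem_iota /= => ip /eqP.
  by rewrite (y_notin (Ordinal ip)).
have := max_poly_roots P_neq0 roots_P uniq_roots.
by rewrite size_P /= size_map size_iota ltnn.
Qed.

Variable n : nat.
Hypotheses (n_gt0 : (0 < n)%N) (cardF : #|F| = (p ^ n)%N).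

Local Notation Tr := (@Tr F p n).

Lemma TrD (y z : F) : Tr (y + z) = Tr y + Tr z.
Proof.
rewrite /Tr -big_split; apply: eq_bigr => i _; apply: exprDn_pchar.
by rewrite (eq_pnat _ (GRing.pcharf_eq pF)) pnatX pnat_id.
Qed.

Lemma Tr0 : Tr 0 = 0.
Proof. by rewrite /Tr big1 // => i _; rewrite expr0n expn_eq0 gtn_eqF. Qed.

Lemma TrMn (y : F) j : Tr (y *+ j) = Tr y *+ j.
Proof. by elim: j => [|j IH]; rewrite ?mulr0n ?Tr0 // !mulrS TrD IH. Qed.

Lemma Tr_pFrobenius (y : F) : Tr y ^+ p = Tr y.
Proof.
rewrite -(pFrobenius_autE pF) /Tr rmorph_sum /=.
under eq_bigr => i _ do rewrite pFrobenius_autE -exprM -expnSr.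
case: n n_gt0 cardF => // n' _ cardF'.
rewrite big_ord_recr big_ord_recl /= -cardF' expf_card expn0 expr1 addrC.
by congr (_ + _); apply: eq_bigr => i _.
Qed.

Lemma Tr_natr (y : F) : exists m, Tr y = m%:R.
Proof. exact/pFrobenius_fixed_natr/Tr_pFrobenius. Qed.

(* [Tr] is a polynomial of degree [p ^ n.-1 < #|F|], so it does not vanish on all of [F]. *)
Lemma Tr_neq0 : exists y, Tr y != 0.
Proof.
have [y|Tr_eq0] := pickP (fun y => Tr y != 0); first by exists y.
case: n n_gt0 cardF Tr_eq0 => // n' _ cardF' Tr_eq0.
pose P : {poly F} := \sum_(i < n'.+1) 'X^(p ^ i).
have P_lead : P`_(p ^ n') = 1.
  rewrite /P coef_sum big_ord_recr /= coefXn eqxx big1 ?add0r // => i _.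
  by rewrite coefXn eqn_exp2l // eqn_leq leqNgt ltn_ord.
have P_neq0 : P != 0.
  by apply: contra_eq_neq P_lead => ->; rewrite coef0 eq_sym oner_neq0.
have size_P : (size P <= (p ^ n').+1)%N.
  apply: leq_trans (size_sum _ _ _) _; apply/bigmax_leqP => i _.
  by rewrite size_polyXn ltnS leq_pexp2l // -ltnS ltn_ord.
have roots_P : all (root P) (enum F).
  apply/allP => y _; rewrite /root horner_sum.
  by rewrite (eq_bigr _ (fun i _ => hornerXn _ _)); apply/negbFE/Tr_eq0.
have := max_poly_roots P_neq0 roots_P (enum_uniq F).
rewrite -cardE cardF' expnS => /leq_trans/(_ size_P).
have : (0 < p ^ n')%N by rewrite expn_gt0 p_gt0.
nia.
Qed.

Lemma Tr_eq1 : exists y, Tr y = 1.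
Proof.
have [y Ty_neq0] := Tr_neq0; have [k Ty] := Tr_natr y.
move: Ty_neq0; rewrite Ty -(dvdn_pcharf pF) => p_ndvd_k.
have k_gt0 : (0 < k)%N by case: k {Ty} p_ndvd_k; rewrite ?dvdn0.
have [u v Euv _] := egcdnP p k_gt0.
have coprime_kp : gcdn k p = 1%N.
  by apply/eqP; rewrite -/(coprime k p) coprime_sym prime_coprime.
exists (y *+ u); rewrite TrMn Ty -mulrnA mulnC Euv coprime_kp natrD natrM.
by rewrite (GRing.pcharf0 pF) mulr0 add0r.
Qed.

Definition trace_char (y : F) : algC := chi p (Tr y).

Lemma chi_TrB (y z : F) : chi p (Tr y - Tr z) = trace_char y * (trace_char z)^*.
Proof.
rewrite /trace_char; have [a ->] := Tr_natr y; have [b ->] := Tr_natr z.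
by rewrite chi_natrB -!chi_natr.
Qed.

Lemma trace_charD (y z : F) : trace_char (y + z) = trace_char y * trace_char z.
Proof.
by rewrite /trace_char TrD; have [a ->] := Tr_natr y; have [b ->] := Tr_natr z;
  rewrite -natrD !chi_natr exprD.
Qed.

Lemma trace_char0 : trace_char 0 = 1.
Proof. by rewrite /trace_char Tr0 -(mulr0n 1) chi_natr. Qed.

Lemma sum_trace_char : \sum_(y : F) trace_char y = 0.
Proof.
have [y1 Ty1] := Tr_eq1.
have y1_zeta : trace_char y1 = zeta p by rewrite /trace_char Ty1 -(mulr1n 1) chi_natr.
have : \sum_(y : F) trace_char y = zeta p * \sum_(y : F) trace_char y.
  rewrite {1}(reindex_inj (addrI y1)) mulr_sumr.
  by apply: eq_bigr => y _; rewrite trace_charD y1_zeta.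
move/eqP; rewrite -subr_eq0 -{1}[\sum_y _]mul1r -mulrBl mulf_eq0 subr_eq0 eq_sym.
by rewrite (negbTE (zeta_neq1 p_gt1)) => /eqP.
Qed.

Lemma walsh_at0 d (b : F) : (0 < d)%N -> coprime d #|F|.-1 -> b != 0 ->
  walsh p n d b 0 = 0.
Proof.
move=> d_gt0 d_coprime b_neq0.
have Xd_inj := bij_inj (expr_coprime_bij d_gt0 d_coprime).
have bXd_inj : injective (fun x : F => b * x ^+ d) by move=> x y /(mulfI b_neq0)/Xd_inj.
rewrite -sum_trace_char (reindex_inj bXd_inj) /walsh; apply: eq_bigr => x _.
by rewrite mul0r chi_TrB trace_char0 conjC1 mulr1.
Qed.

Lemma walsh1_prim_root d (sigma : F) tau : (0 < d)%N ->
  #|F|.-1.-primitive_root sigma ->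
  walsh p n d 1 (sigma ^+ tau) = (1 + theta p n d sigma tau)^*.
Proof.
move=> d_gt0 sigma_prim; rewrite /walsh; under eq_bigr do rewrite chi_TrB.
rewrite (bigD1 0) //= expr0n gtn_eqF // !mulr0 trace_char0 conjC1 mulr1.
rewrite rmorphD /= conjC1; congr (1 + _).
rewrite (eq_bigl (mem [set~ 0 : F])) => [|x]; last by rewrite !inE.
rewrite -(prim_root_expr_image sigma_prim).
rewrite (big_imset _ (in2W (prim_root_expr_inj sigma_prim))) /=.
rewrite /theta cardF subn1 rmorph_sum; apply: eq_bigr => t _.
by rewrite chi_TrB rmorphM /= conjCK mulrC mul1r -exprD addnC -exprM mulnC.
Qed.

End PrimeSubfield.

Lemma norm_add1_three_valued (R : numDomainType) (S x : R) : 0 <= S ->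
  x \in [:: -1; -1 + S; -1 - S] -> `|1 + x| \in [:: 0; S].
Proof.
move=> S_ge0; rewrite !inE => /or3P[] /eqP ->.
- by rewrite subrr normr0 eqxx.
- by rewrite addrA subrr add0r ger0_norm // eqxx orbT.
- by rewrite addrA subrr add0r normrN ger0_norm // eqxx orbT.
Qed.

(* Primality of [p] follows from [pF], and that each value of [theta] is attained is
   not needed. *)
Theorem mainTheorem3 (F : finFieldType) (p n s d : nat) (sigma : F) :
  prime p -> p \in [pchar F] -> (0 < n)%N -> #|F| = (p ^ n)%N ->
  (0 < d)%N -> coprime d (p ^ n - 1) ->
  (p ^ n - 1).-primitive_root sigma ->
  (forall tau : nat, (tau < p ^ n - 1)%N ->
     theta p n d sigma tau \in
       [:: -1; -1 + sqrtC ((p ^ (n + s))%:R); -1 - sqrtC ((p ^ (n + s))%:R)]) ->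
  (exists2 tau, (tau < p ^ n - 1)%N & theta p n d sigma tau = -1) ->
  (exists2 tau, (tau < p ^ n - 1)%N &
     theta p n d sigma tau = -1 + sqrtC ((p ^ (n + s))%:R)) ->
  (exists2 tau, (tau < p ^ n - 1)%N &
     theta p n d sigma tau = -1 - sqrtC ((p ^ (n + s))%:R)) ->
  forall b a : F, b != 0 ->
    `|walsh p n d b a| \in [:: 0; sqrtC ((p ^ (n + s))%:R)].
Proof.
move=> _ pF n_gt0 cardF d_gt0 + + theta_vals _ _ _ b a b_neq0.
have card_pred : (p ^ n - 1)%N = #|F|.-1 by rewrite cardF subn1.
rewrite card_pred => d_coprime sigma_prim.
have [->|a_neq0] := eqVneq a 0; first by rewrite walsh_at0 // normr0 mem_head.
have [root_d _ root_dK] := expr_coprime_bij d_gt0 d_coprime.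
pose lam := root_d b^-1.
have b_lam : b * lam ^+ d = 1 by rewrite root_dK mulfV.
have lam_neq0 : lam != 0.
  by apply: contra_eq_neq b_lam => ->; rewrite expr0n gtn_eqF // mulr0 eq_sym oner_neq0.
have : a * lam \in [set~ 0] by rewrite !inE mulf_neq0.
rewrite -(prim_root_expr_image sigma_prim) => /imsetP[tau _ a_lam].
rewrite (walsh_scale p n a lam_neq0 b_lam) a_lam.
rewrite (walsh1_prim_root pF n_gt0 cardF tau d_gt0 sigma_prim) norm_conjC.
apply: norm_add1_three_valued; first by rewrite sqrtC_ge0 ler0n.
by apply: theta_vals; rewrite card_pred.
Qed.
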